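(* Let $N\in\mathbb N$, $F=\mathbb Z/N\mathbb Z$, $k\in\mathbb N$ and $m_1,\ldots,m_{2k}\in\mathbb N$ with $\sum_{\ell=1}^{2k}m_\ell=N$. Let $\sigma\in G_F$ be the configuration $\sigma=(1)^{m_1}(-1)^{m_2}\cdots(1)^{m_{2k-1}}(-1)^{m_{2k}}$, i.e. reading $\sigma_1,\sigma_2,\ldots,\sigma_N$ one sees $m_1$ entries $1$, then $m_2$ entries $-1$, etc. Then, with indices of the $m_j$ taken in $\mathbb Z/2k\mathbb Z$, \[\Delta A_F(\sigma)=\sum_{\ell=1}^{2k}\sum_{n=1}^{k}\Big(\delta_{m_\ell+\cdots+m_{\ell+2n-2}}-\delta_{m_\ell+\cdots+m_{\ell+2n-1}}\Big).\]
   Context: $G_F=\{-1,1\}^F$ (with $N\equiv0$ in $F$), $A_F(\sigma)_f=\sum_{j\in F}\sigma_j\sigma_{j+f}$, $(\Delta h)_f=\frac14(h_{f-1}-2h_f+h_{f+1})$ for $h\in\mathbb R^F$, and for an integer $x$, $\delta_x\in\mathbb R^F$ is the indicator function of the residue class $x\bmod N$. *)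

(* F = Z/NZ is represented by 'I_N (N > 0), with cyclic
   arithmetic; functions on F are functions 'I_N -> R. *)
From mathcomp Require Import all_boot all_order all_algebra.
Set Implicit Arguments. Unset Strict Implicit. Unset Printing Implicit Defensive.
Import Order.TTheory GRing.Theory Num.Theory.
Local Open Scope ring_scope.

Lemma addF_subproof (N : nat) (j f : 'I_N) : ((j + f) %% N < N)%N.
Proof. by apply: ltn_pmod; apply: leq_ltn_trans (ltn_ord j). Qed.
Definition addF (N : nat) (j f : 'I_N) : 'I_N := Ordinal (addF_subproof j f).

Definition Acorr (R : ringType) (N : nat) (sigma : 'I_N -> R) : 'I_N -> R :=
  fun f => \sum_(j : 'I_N) sigma j * sigma (addF j f).

Definition Delta (R : fieldType) (N : nat) (h : 'I_N -> R) : 'I_N -> R :=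
  fun f => (h (ord_pred f) - 2 * h f + h (ordS f)) / 4.

Definition delta (R : ringType) (N : nat) (x : nat) : 'I_N -> R :=
  fun f => if (nat_of_ord f == x %% N)%N then 1 else 0.

Definition config_seq (R : ringType) (k : nat) (m : nat -> nat) : seq R :=
  flatten [seq nseq (m l) (if odd l then 1 else -1 : R) | l <- iota 1 k.*2].

(* sigma_1, ..., sigma_N are the successive letters of the word; the element
   i of F = Z/NZ (0 <= i < N) is position i (with position N = 0 in F),
   i.e. the letter of index (i - 1) mod N (0-based) *)
Definition config (R : ringType) (N k : nat) (m : nat -> nat) : 'I_N -> R :=
  fun i => nth 0 (config_seq R k m) ((nat_of_ord i + N.-1) %% N).

(* m with index taken in Z/2kZ (representatives 1..2k) *)
Definition mcyc (k : nat) (m : nat -> nat) (i : nat) : nat :=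
  m ((i.-1 %% k.*2).+1).

Definition msum (k : nat) (m : nat -> nat) (l r : nat) : nat :=
  (\sum_(l <= i < l + r) mcyc k m i)%N.
Arguments msum k m l r : clear implicits.
Arguments mcyc k m i : clear implicits.
Arguments config R N k m i : clear implicits.
Arguments delta R N x f : clear implicits.

(* Summation by parts turns the second difference of the autocorrelation
   into minus the autocorrelation of the first difference:
   Delta A(sigma) = -1/4 A(sigma'), with sigma'_j = sigma_{j+1} - sigma_j.
   The configuration is a step function, so sigma' = 2 E with
   E = sum_l (-1)^l delta_{p_l}, where p_l = m_1 + ... + m_l are the jumps.
   Since p_{l+2k} = N + p_l, the sum defining E may be taken over any window
   of 2k consecutive indices; expanding E_{j+f} over the window following l
   gives A(E) = sum_l sum_{r=1}^{2k} (-1)^r delta_{m_{l+1} + ... + m_{l+r}},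
   and grouping r = 2n-1, 2n yields the stated formula. *)
From mathcomp Require Import all_boot all_order all_algebra zify ring.
Set Implicit Arguments. Unset Strict Implicit. Unset Printing Implicit Defensive.
Import Order.TTheory GRing.Theory Num.Theory.
Local Open Scope ring_scope.

Section BigNat.

Variable V : zmodType.

Lemma big_nat_cyclic_shift n (G : nat -> V) : G n.+1 = G 1 ->
  \sum_(1 <= l < n.+1) G l.+1 = \sum_(1 <= l < n.+1) G l.
Proof.
case: n => [|n] hG; first by rewrite !big_geq.
by rewrite big_nat_recr // [RHS]big_nat_recl //= hG addrC.
Qed.

Lemma big_nat_shift_periodic n (g : nat -> V) a :
    (forall l, (0 < l)%N -> g (l + n)%N = g l) ->
  \sum_(1 <= l < n.+1) g (l + a)%N = \sum_(1 <= l < n.+1) g l.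
Proof.
move=> g_per; elim: a => [|a IH]; first by under eq_bigr do rewrite addn0.
rewrite -[RHS]IH -(big_nat_cyclic_shift (G := fun l => g (l + a)%N)).
  by apply: eq_bigr => l _; rewrite addnS.
by rewrite -[in RHS]g_per // addnAC add1n.
Qed.

Lemma nth_flatten_nseq (m : nat -> nat) (v : nat -> V) L s t :
    (t < \sum_(s <= i < s + L) m i)%N ->
  nth 0 (flatten [seq nseq (m l) (v l) | l <- iota s L]) t =
  v s + \sum_(s <= l < s + L) (v l.+1 - v l) *+ (\sum_(s <= i < l.+1) m i <= t).
Proof.
elim: L s t => [|L IH] s t; first by rewrite addn0 big_geq.
rewrite addnS big_ltn ?ltnS ?leq_addr // => ht.
rewrite /= nth_cat size_nseq; case: ltnP => hts.
  rewrite nth_nseq hts big1_seq ?addr0 // => l /andP[_].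
  rewrite mem_index_iota => /andP[sl _].
  by rewrite big_ltn ?ltnS // leqNgt (leq_trans hts) ?leq_addr.
rewrite IH; last by rewrite -(ltn_add2l (m s)) subnKC.
rewrite big_ltn ?ltnS ?leq_addr // big_nat1 hts addrA [v s + _]addrC subrK.
congr (_ + _); apply: eq_big_nat => l /andP[sl _].
by rewrite (big_ltn (m := s)) ?ltnS ?(ltnW sl) // leq_subRL.
Qed.

End BigNat.

Lemma sum_signr_double (R : pzRingType) k : \sum_(1 <= l < k.*2.+1) (-1) ^+ l = 0 :> R.
Proof.
elim: k => [|k IH]; first by rewrite big_geq.
by rewrite doubleS big_nat_recr // big_nat_recr //= IH add0r !exprS !mulN1r opprK addNr.
Qed.

Lemma signrD_double (R : pzRingType) n k : (-1) ^+ (n + k.*2) = (-1) ^+ n :> R.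
Proof. by rewrite -signr_odd oddD odd_double addbF signr_odd. Qed.

Lemma sum_odd_even_pairs (R : pzRingType) k (g : nat -> R) :
  \sum_(1 <= n < k.+1) (g n.*2.-1 - g n.*2) =
  - \sum_(1 <= r < k.*2.+1) (-1) ^+ r * g r.
Proof.
elim: k => [|k IH]; first by rewrite !big_geq ?oppr0.
rewrite big_nat_recr //= IH doubleS [in RHS]big_nat_recr // [in RHS]big_nat_recr //=.
rewrite !exprS -signr_odd odd_double expr0 !mulr1 !mulN1r opprK mul1r.
by rewrite !opprD opprK addrA.
Qed.

Section CyclicArithmetic.

Variable N : nat.

Lemma addF_ordSr (j f : 'I_N) : addF j (ordS f) = ordS (addF j f).
Proof.
apply: val_inj => /=.
by rewrite -[f.+1]addn1 -[((j + f) %% N).+1]addn1 modnDml modnDmr addnA.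
Qed.

Lemma addF_ordSl (j f : 'I_N) : addF (ordS j) f = ordS (addF j f).
Proof.
apply: val_inj => /=.
by rewrite -[j.+1]addn1 -[((j + f) %% N).+1]addn1 !modnDml addnAC.
Qed.

Lemma addF_ordS_pred (j f : 'I_N) : addF (ordS j) (ord_pred f) = addF j f.
Proof.
apply: val_inj => /=; rewrite modnDml modnDmr.
have N0 : (0 < N)%N by apply: leq_ltn_trans (ltn_ord j).
have -> : (j.+1 + (f + N).-1 = j + f + N)%N by lia.
by rewrite modnDr.
Qed.

Lemma sum_ordS (V : zmodType) (g : 'I_N -> V) : \sum_j g (ordS j) = \sum_j g j.
Proof. by rewrite [RHS](reindex_inj (can_inj (@ordSK N))). Qed.

(* Moving from j - 1 to j in Z/NZ, the indicator of [p, N) switches on at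
   j = p and off at the wrap-around j = 0. *)
Lemma leq_pred_modn p j : (p <= N)%N -> (j < N)%N ->
  ((p <= j) + (j == 0) = (j == p %% N) + (p <= (j + N.-1) %% N))%N.
Proof.
move=> pN jN; have N0 : (0 < N)%N by apply: leq_ltn_trans jN.
have -> : ((j + N.-1) %% N = if j == 0 then N.-1 else j.-1)%N.
  case: eqP => [->|/eqP j0]; first by rewrite add0n modn_small // prednK.
  have -> : (j + N.-1 = j.-1 + N)%N by lia.
  by rewrite modnDr modn_small // (leq_ltn_trans (leq_pred j)).
have -> : (p %% N = if p == N then 0 else p)%N.
  case: eqP => [->|/eqP pn]; first by rewrite modnn.
  by rewrite modn_small // ltn_neqAle pn pN.
by case: (j =P 0) => [->|/eqP j0]; case: (p =P N) => [->|/eqP pn] /=; lia.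
Qed.

Lemma delta_addNl (R : nzRingType) x (f : 'I_N) : delta R N (N + x) f = delta R N x f.
Proof. by rewrite /delta modnDl. Qed.

Lemma sum_delta_addF (R : nzRingType) a c (f : 'I_N) :
  \sum_j delta R N a j * delta R N (a + c) (addF j f) = delta R N c f.
Proof.
have N0 : (0 < N)%N by apply: leq_ltn_trans (ltn_ord f).
rewrite (bigD1 (Ordinal (ltn_pmod a N0))) //= big1 ?addr0.
  rewrite /delta /= eqxx mul1r modnDml eqn_modDl modn_small //.
by move=> j; rewrite -(inj_eq val_inj) /= /delta => /negbTE ->; rewrite mul0r.
Qed.

End CyclicArithmetic.

Definition fdiff (V : zmodType) N (s : 'I_N -> V) : 'I_N -> V :=
  fun j => s (ordS j) - s j.

Lemma Acorr_eq (R : nzRingType) N (s t : 'I_N -> R) : s =1 t -> Acorr s =1 Acorr t.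
Proof. by move=> st f; apply: eq_bigr => j _; rewrite !st. Qed.

Lemma AcorrZ (R : comNzRingType) N c (s : 'I_N -> R) f :
  Acorr (fun j => c * s j) f = c ^+ 2 * Acorr s f.
Proof. by rewrite mulr_sumr; apply: eq_bigr => j _; rewrite mulrACA. Qed.

Lemma Delta_Acorr (R : fieldType) N (s : 'I_N -> R) f :
  Delta (Acorr s) f = - Acorr (fdiff s) f / 4.
Proof.
rewrite /Delta /Acorr /fdiff; congr (_ / _).
under [in RHS]eq_bigr => j _ do rewrite mulrBl !mulrBr.
rewrite !sumrB.
have -> : \sum_j s j * s (addF j (ord_pred f)) = \sum_j s (ordS j) * s (addF j f).
  by rewrite -sum_ordS; apply: eq_bigr => j _; rewrite addF_ordS_pred.
have -> : \sum_j s j * s (addF j (ordS f)) = \sum_j s j * s (ordS (addF j f)).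
  by apply: eq_bigr => j _; rewrite addF_ordSr.
have -> : \sum_j s (ordS j) * s (ordS (addF j f)) = \sum_j s j * s (addF j f).
  by rewrite -[RHS]sum_ordS; apply: eq_bigr => j _; rewrite addF_ordSl.
ring.
Qed.

Section Blocks.

Variables (k : nat) (m : nat -> nat).

Lemma mcyc_id i : (0 < i <= k.*2)%N -> mcyc k m i = m i.
Proof. by case/andP=> i0 ik; rewrite /mcyc modn_small ?prednK. Qed.

Lemma mcyc_addn_double i : (0 < i)%N -> mcyc k m (i + k.*2) = mcyc k m i.
Proof.
move=> i0; rewrite /mcyc.
have -> : ((i + k.*2).-1 = i.-1 + k.*2)%N by lia.
by rewrite modnDr.
Qed.

Lemma msum_addn_double l r : (0 < l)%N -> msum k m (l + k.*2) r = msum k m l r.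
Proof.
move=> l0; rewrite /msum -addnA [(k.*2 + r)%N]addnC addnA big_addn addnK.
by apply: eq_big_nat => i /andP[li _]; rewrite mcyc_addn_double // (leq_trans l0 li).
Qed.

Lemma msumD l a b : msum k m l (a + b) = (msum k m l a + msum k m (l + a) b)%N.
Proof. by rewrite /msum addnA (big_cat_nat _ (n := l + a)) ?leq_addr. Qed.

Lemma msum1 l : (l <= k.*2)%N -> msum k m 1 l = (\sum_(1 <= i < l.+1) m i)%N.
Proof.
move=> lk; rewrite /msum add1n; apply: eq_big_nat => i /andP[i0 il].
by rewrite mcyc_id // i0 -ltnS (leq_trans il) ?ltnS.
Qed.

Variables (R : nzRingType) (N : nat).
Hypothesis sum_m : (\sum_(1 <= l < k.*2.+1) m l)%N = N.

Lemma msum1_leqN l : (l <= k.*2)%N -> (msum k m 1 l <= N)%N.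
Proof.
move=> lk; rewrite -sum_m -(msum1 (leqnn _)) -(subnKC lk) msumD; exact: leq_addr.
Qed.

Lemma msum1_addn_double l : msum k m 1 (l + k.*2) = (N + msum k m 1 l)%N.
Proof.
by rewrite addnC msumD msum1 // sum_m add1n -[k.*2.+1]/(1 + k.*2)%N msum_addn_double.
Qed.

Lemma nth_config_seq t : (t < N)%N ->
  nth 0 (config_seq R k m) t =
  1 + \sum_(1 <= l < k.*2.+1) 2 * (-1) ^+ l *+ (msum k m 1 l <= t).
Proof.
move=> tN; rewrite nth_flatten_nseq add1n ?sum_m //=.
congr (_ + _); apply: eq_big_nat => l /andP[l0 lk].
rewrite msum1 -1?ltnS //; congr (_ *+ _).
by rewrite mulr_natl mulr2n -signr_odd; case: (odd l); rewrite /= ?opprK.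
Qed.

Definition config_jumps : 'I_N -> R :=
  fun j => \sum_(1 <= l < k.*2.+1) (-1) ^+ l * delta R N (msum k m 1 l) j.

Lemma config_jumps_window a j :
  config_jumps j =
  \sum_(1 <= l < k.*2.+1) (-1) ^+ (l + a) * delta R N (msum k m 1 (l + a)) j.
Proof.
symmetry; apply: (big_nat_shift_periodic
  (g := fun l => (-1) ^+ l * delta R N (msum k m 1 l) j)) => l _ /=.
by rewrite msum1_addn_double delta_addNl signrD_double.
Qed.

Lemma sum_delta_mul_config_jumps l f :
  \sum_j delta R N (msum k m 1 l) j * config_jumps (addF j f) =
  \sum_(1 <= r < k.*2.+1) (-1) ^+ (r + l) * delta R N (msum k m l.+1 r) f.
Proof.
under eq_bigr => j _ do rewrite (config_jumps_window l) mulr_sumr.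
rewrite exchange_big /=; apply: eq_bigr => r _.
under eq_bigr => j _ do rewrite mulrA commr_sign -mulrA (addnC r l) msumD add1n.
by rewrite -mulr_sumr sum_delta_addF addnC.
Qed.

Lemma Acorr_config_jumps f :
  Acorr config_jumps f =
  \sum_(1 <= l < k.*2.+1) \sum_(1 <= r < k.*2.+1)
     (-1) ^+ r * delta R N (msum k m l.+1 r) f.
Proof.
rewrite /Acorr; under eq_bigr => j _ do rewrite {1}/config_jumps mulr_suml.
rewrite exchange_big /=; apply: eq_bigr => l _.
under eq_bigr => j _ do rewrite -mulrA.
rewrite -mulr_sumr sum_delta_mul_config_jumps mulr_sumr; apply: eq_bigr => r _.
by rewrite mulrA -exprD addnCA addnn signrD_double.
Qed.

End Blocks.

Lemma fdiff_config (R : comNzRingType) N k m :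
    (\sum_(1 <= l < k.*2.+1) m l)%N = N ->
  fdiff (config R N k m) =1 (fun j => 2 * @config_jumps k m R N j).
Proof.
move=> sum_m j; have N0 : (0 < N)%N by apply: leq_ltn_trans (ltn_ord j).
rewrite /fdiff /config /=.
have -> : ((j.+1 %% N + N.-1) %% N = j)%N.
  rewrite modnDml; have -> : (j.+1 + N.-1 = j + N)%N by lia.
  by rewrite modnDr modn_small.
rewrite !(nth_config_seq R sum_m) ?ltn_pmod // opprD addrACA subrr add0r -sumrB.
rewrite /config_jumps mulr_sumr.
transitivity (\sum_(1 <= l < k.*2.+1)
  (2 * ((-1) ^+ l * delta R N (msum k m 1 l) j) - 2 * (-1) ^+ l *+ (j == 0 :> nat))).
  apply: eq_big_nat => l /andP[_ lk].
  have := leq_pred_modn (msum1_leqN sum_m (lk : l <= k.*2)%N) (ltn_ord j).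
  move/(congr1 (fun n => (2 * (-1) ^+ l : R) *+ n)); rewrite !mulrnDr => step.
  have -> : 2 * ((-1) ^+ l * delta R N (msum k m 1 l) j) =
            2 * (-1) ^+ l *+ (nat_of_ord j == msum k m 1 l %% N)%N.
    by rewrite /delta mulrA; case: (_ == _); rewrite ?mulr1 ?mulr0.
  by apply/eqP; rewrite subr_eq addrAC -step addrK.
(* the wrap-around corrections at j = 0 cancel: the signs sum to zero *)
by rewrite sumrB sumrMnl -!mulr_sumr sum_signr_double mulr0 mul0rn subr0.
Qed.

Theorem mainTheorem9 (R : realFieldType) (N k : nat) (m : nat -> nat) :
  (0 < N)%N ->
  (\sum_(1 <= l < k.*2.+1) m l)%N = N ->
  forall f : 'I_N,
    Delta (Acorr (config R N k m)) f =
    \sum_(1 <= l < k.*2.+1) \sum_(1 <= n < k.+1)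
       (delta R N (msum k m l (n.*2.-1)) f - delta R N (msum k m l n.*2) f).
Proof.
(* [0 < N] is redundant: it follows from [f : 'I_N]. *)
move=> _ sum_m f.
rewrite Delta_Acorr (Acorr_eq (fdiff_config R sum_m)) AcorrZ (Acorr_config_jumps R sum_m).
have -> : (2 ^+ 2 : R) = 4 by rewrite expr2 -natrM.
rewrite mulNr mulrAC mulfV ?pnatr_eq0 // mul1r.
under [RHS]eq_bigr => l _ do
  rewrite (sum_odd_even_pairs k (fun r => delta R N (msum k m l r) f)).
rewrite sumrN; congr (- _).
under eq_bigr => l _ do rewrite -(addn1 l).
apply: (big_nat_shift_periodic
  (g := fun l => \sum_(1 <= r < k.*2.+1) (-1) ^+ r * delta R N (msum k m l r) f)) => l l0.
by apply: eq_bigr => r _; rewrite msum_addn_double.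
Qed.
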